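(* Forgetting the rack structure on the domain defines a one-to-one correspondence between crossed modules of racks and generalized augmented racks. Explicitly: if $\mu:X\to R$ is a crossed module of racks, then $(R,X,\mu)$, with $X$ regarded merely as an $R$-set, is a generalized augmented rack; conversely, if $(R,X,p)$ is a generalized augmented rack, then $X$ with the operation $x\lhd y:=x\cdot p(y)$ is a rack and $p:X\to R$, together with the given action of $R$ on $X$, is a crossed module of racks; and these two constructions are mutually inverse.
   Context: A (right) rack is a set $X$ with a binary operation $(x,y)\mapsto x\lhd y$ such that each map $x\mapsto x\lhd y$ is a bijection of $X$ and $(x\lhd y)\lhd z=(x\lhd z)\lhd(y\lhd z)$ for all $x,y,z\in X$. A morphism of racks is a map $\mu$ with $\mu(r\lhd r')=\mu(r)\lhd\mu(r')$. If $R$ is a rack and $X$ a set, an action of $R$ on $X$ (making $X$ an $R$-set, or $R$-module) is a family of bijections $x\mapsto x\cdot r$ of $X$, one for each $r\in R$, such that $(x\cdot r)\cdot r'=(x\cdot r')\cdot(r\lhd r')$ for all $x\in X$, $r,r'\in R$. If $X$ is itself a rack, the action is by automorphisms if moreover $(x\lhd x')\cdot r=(x\cdot r)\lhd(x'\cdot r)$. A crossed module of racks is a morphism of racks $\mu:R\to S$ together with an action of $S$ on $R$ by automorphisms such that (1) $\mu(r\cdot s)=\mu(r)\lhd s$ for all $r\in R$, $s\in S$, and (2) (Peiffer identity) $r\cdot\mu(r')=r\lhd r'$ for all $r,r'\in R$. A generalized augmented rack is a triple $(R,X,p)$ where $R$ is a rack, $X$ is an $R$-set, and $p:X\to R$ is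 a map with $p(x\cdot r)=p(x)\lhd r$ for all $x\in X$, $r\in R$. *)

From mathcomp Require Import ssreflect ssrfun ssrbool.

Set Implicit Arguments.
Unset Strict Implicit.

Definition is_rack (X : Type) (op : X -> X -> X) : Prop :=
  (forall y : X, bijective (fun x => op x y)) /\
  (forall x y z : X, op (op x y) z = op (op x z) (op y z)).

Definition is_rack_morphism (X Y : Type) (opX : X -> X -> X) (opY : Y -> Y -> Y)
  (f : X -> Y) : Prop :=
  forall x x' : X, f (opX x x') = opY (f x) (f x').

Definition is_rack_action (R X : Type) (opR : R -> R -> R) (act : X -> R -> X)
  : Prop :=
  (forall r : R, bijective (fun x => act x r)) /\
  (forall (x : X) (r r' : R), act (act x r) r' = act (act x r') (opR r r')).

Definition acts_by_automorphisms (R X : Type) (opX : X -> X -> X)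
  (act : X -> R -> X) : Prop :=
  forall (x x' : X) (r : R), act (opX x x') r = opX (act x r) (act x' r).

Definition is_crossed_module (R S : Type) (opR : R -> R -> R) (opS : S -> S -> S)
  (mu : R -> S) (act : R -> S -> R) : Prop :=
  [/\ is_rack opR /\ is_rack opS, is_rack_morphism opR opS mu,
      is_rack_action opS act /\ acts_by_automorphisms opR act,
      (forall (r : R) (s : S), mu (act r s) = opS (mu r) s)
    & (forall r r' : R, act r (mu r') = opR r r')].

Definition is_gen_aug_rack (R X : Type) (opR : R -> R -> R) (act : X -> R -> X)
  (p : X -> R) : Prop :=
  [/\ is_rack opR, is_rack_action opR act
    & (forall (x : X) (r : R), p (act x r) = opR (p x) r)].

Definition induced_op (R X : Type) (act : X -> R -> X) (p : X -> R) : X -> X -> X :=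
  fun x y => act x (p y).

From mathcomp Require Import ssreflect ssrfun ssrbool.
From Stdlib Require Import FunctionalExtensionality.

(* The Peiffer identity forces x <| y = x . p(y), so the rack structure of
   the domain of a crossed module is determined by the action and p.
   Conversely, for x <| y := x . p(y), self-distributivity, the morphism
   property of p and the automorphism property of the action are each the
   action axiom (x . r) . r' = (x . r') . (r <| r') combined with
   equivariance of p. *)

Section InducedRack.

Variables (R X : Type) (opR : R -> R -> R) (act : X -> R -> X) (p : X -> R).

Hypothesis act_rack : is_rack_action opR act.
Hypothesis p_equivariant : forall (x : X) (r : R), p (act x r) = opR (p x) r.

Lemma induced_op_rack : is_rack (induced_op act p).
Proof.
case: act_rack => act_bij act_comp; split=> [y | x y z].
  exact: act_bij.
by rewrite /induced_op act_comp p_equivariant.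
Qed.

Lemma induced_op_morphism : is_rack_morphism (induced_op act p) opR p.
Proof. by move=> x x'; rewrite /induced_op p_equivariant. Qed.

Lemma induced_op_automorphisms : acts_by_automorphisms (induced_op act p) act.
Proof.
by case: act_rack => _ act_comp x x' r; rewrite /induced_op act_comp p_equivariant.
Qed.

End InducedRack.

Lemma gen_aug_rack_of_crossed_module (R X : Type) (opX : X -> X -> X)
  (opR : R -> R -> R) (act : X -> R -> X) (p : X -> R) :
  is_crossed_module opX opR p act -> is_gen_aug_rack opR act p.
Proof. by case=> [[_ rackR] _ [act_rack _] p_equivariant _]. Qed.

Lemma crossed_module_of_gen_aug_rack (R X : Type) (opR : R -> R -> R)
  (act : X -> R -> X) (p : X -> R) :
  is_gen_aug_rack opR act p -> is_crossed_module (induced_op act p) opR p act.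
Proof.
case=> rackR act_rack p_equivariant; split.
- by split; first exact: induced_op_rack act_rack p_equivariant.
- exact: induced_op_morphism.
- by split; last exact: induced_op_automorphisms act_rack p_equivariant.
- exact: p_equivariant.
- by [].
Qed.

Lemma crossed_module_opE (R X : Type) (opX : X -> X -> X) (opR : R -> R -> R)
  (act : X -> R -> X) (p : X -> R) :
  is_crossed_module opX opR p act -> opX = induced_op act p.
Proof.
case=> _ _ _ _ peiffer.
by do 2!apply: functional_extensionality => ?; rewrite /induced_op peiffer.
Qed.

Theorem mainTheorem1 (R X : Type) (opR : R -> R -> R) (act : X -> R -> X)
  (p : X -> R) :
  [/\ (forall opX : X -> X -> X,
         is_crossed_module opX opR p act -> is_gen_aug_rack opR act p),
      (is_gen_aug_rack opR act p ->
         is_crossed_module (induced_op act p) opR p act)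
    & (forall opX : X -> X -> X,
         is_crossed_module opX opR p act -> opX = induced_op act p)].
Proof.
split.
- by move=> opX; exact: gen_aug_rack_of_crossed_module.
- exact: crossed_module_of_gen_aug_rack.
- by move=> opX; exact: crossed_module_opE.
Qed.
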